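(* Let $\mathcal{S}=(\mathscr{X},\nabla)$ be a non-commutative spacetime. Then there exists an implication $\to_{\mathcal{S}}:\mathscr{X}^{op}\times\mathscr{X}\to\mathscr{X}$ on the monoidal poset $\mathscr{X}$ such that for all $a,b,c\in\mathscr{X}$, \[ a\otimes\nabla b\le c \iff b\le a\to_{\mathcal{S}} c . \]
   Context: A monoidal poset $(A,\le,\otimes,e)$ is a poset with a monoid structure $(A,\otimes,e)$ whose multiplication is order preserving in each argument. A quantale is a monoidal poset whose underlying poset has all (arbitrary) joins and whose multiplication distributes over arbitrary joins in each argument. A monotone map $f$ between monoidal posets is oplax monoidal if $f(e)\le e$ and $f(a\otimes b)\le f(a)\otimes f(b)$ for all $a,b$. A non-commutative spacetime is a pair $(\mathscr{X},\nabla)$ where $\mathscr{X}$ is a quantale and $\nabla:\mathscr{X}\to\mathscr{X}$ is a join-preserving oplax monoidal map. An implication on a monoidal poset $(A,\le,\otimes,e)$ is a function $\to:A^{op}\times A\to A$, order reversing in its first and order preserving in its second argument, such that $e\le a\to a$ and $(a\to b)\otimes(b\to c)\le a\to c$ for all $a,b,c\in A$. *)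

Set Implicit Arguments.

Section Defs.
Variable X : Type.
Variable le : X -> X -> Prop.

Definition is_poset : Prop :=
  (forall a, le a a) /\
  (forall a b, le a b -> le b a -> a = b) /\
  (forall a b c, le a b -> le b c -> le a c).

Definition is_join (S : X -> Prop) (j : X) : Prop :=
  (forall s, S s -> le s j) /\
  (forall u, (forall s, S s -> le s u) -> le j u).

Definition image (f : X -> X) (S : X -> Prop) : X -> Prop :=
  fun y => exists x, S x /\ y = f x.

Variable mul : X -> X -> X.
Variable e : X.

Definition is_monoidal_poset : Prop :=
  is_poset /\
  (forall a b c, mul (mul a b) c = mul a (mul b c)) /\
  (forall a, mul e a = a) /\ (forall a, mul a e = a) /\
  (forall a a' b, le a a' -> le (mul a b) (mul a' b)) /\
  (forall a b b', le b b' -> le (mul a b) (mul a b')).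

Definition is_quantale : Prop :=
  is_monoidal_poset /\
  (forall S : X -> Prop, exists j, is_join S j) /\
  (forall (a : X) (S : X -> Prop) (j : X), is_join S j ->
      is_join (image (mul a) S) (mul a j)) /\
  (forall (a : X) (S : X -> Prop) (j : X), is_join S j ->
      is_join (image (fun s => mul s a) S) (mul j a)).

Definition is_oplax_monoidal (f : X -> X) : Prop :=
  (forall a b, le a b -> le (f a) (f b)) /\
  le (f e) e /\
  (forall a b, le (f (mul a b)) (mul (f a) (f b))).

Definition preserves_joins (f : X -> X) : Prop :=
  forall (S : X -> Prop) (j : X), is_join S j -> is_join (image f S) (f j).

Definition is_nc_spacetime (nabla : X -> X) : Prop :=
  is_quantale /\ preserves_joins nabla /\ is_oplax_monoidal nabla.

Definition is_implication (imp : X -> X -> X) : Prop :=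
  (forall a a' b, le a a' -> le (imp a' b) (imp a b)) /\
  (forall a b b', le b b' -> le (imp a b) (imp a b')) /\
  (forall a, le e (imp a a)) /\
  (forall a b c, le (mul (imp a b) (imp b c)) (imp a c)).

End Defs.

(* In a complete poset every join-preserving monotone map [f] has a right
   adjoint, [c] being sent to the join of all [b] with [f b <= c].  In a
   quantale [b |-> a * nabla b] preserves joins, and its right adjoint is the
   implication [a -> c].  The implication laws are then read off the counit
   [a * nabla (a -> c) <= c], using [nabla e <= e] for [e <= a -> a] and
   [nabla (x * y) <= nabla x * nabla y] for composition. *)

From Stdlib Require Import ClassicalEpsilon.

Set Implicit Arguments.

Lemma is_join_ext (X : Type) (le : X -> X -> Prop) (S T : X -> Prop) (j : X) :
  (forall x, S x <-> T x) -> is_join le S j -> is_join le T j.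
Proof.
  intros HST [Hub Hleast]; split.
  - intros s Ts; apply Hub, HST, Ts.
  - intros u Hu; apply Hleast; intros s Ss; apply Hu, HST, Ss.
Qed.

Lemma preserves_joins_comp (X : Type) (le : X -> X -> Prop) (f g : X -> X) :
  preserves_joins le f -> preserves_joins le g ->
  preserves_joins le (fun x => f (g x)).
Proof.
  intros Hf Hg S j Hj.
  eapply is_join_ext; [| exact (Hf _ _ (Hg _ _ Hj))].
  intro y; split.
  - intros [z [[x [Sx ->]] ->]]; exists x; split; trivial.
  - intros [x [Sx ->]]; exists (g x); split; trivial; exists x; split; trivial.
Qed.

Section RightAdjoint.

Variables (X : Type) (le : X -> X -> Prop).
Hypothesis le_trans : forall a b c, le a b -> le b c -> le a c.
Hypothesis has_join : forall S : X -> Prop, exists j, is_join le S j.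

Definition sup (S : X -> Prop) : X :=
  proj1_sig (constructive_indefinite_description _ (has_join S)).

Lemma sup_is_join (S : X -> Prop) : is_join le S (sup S).
Proof. exact (proj2_sig (constructive_indefinite_description _ (has_join S))). Qed.

Definition right_adjoint (f : X -> X) (c : X) : X := sup (fun b => le (f b) c).

Lemma right_adjoint_galois (f : X -> X) :
  (forall a b, le a b -> le (f a) (f b)) -> preserves_joins le f ->
  forall b c, le (f b) c <-> le b (right_adjoint f c).
Proof.
  intros f_mono f_join b c; split.
  - intro fb_c; exact (proj1 (sup_is_join _) b fb_c).
  - intro b_adj.
    assert (counit : le (f (right_adjoint f c)) c).
    { apply (proj2 (f_join _ _ (sup_is_join _))).
      intros s [x [fx_c ->]]; exact fx_c. }
    exact (le_trans (f_mono _ _ b_adj) counit).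
Qed.

End RightAdjoint.

Section AdjointImplication.

Variables (X : Type) (le : X -> X -> Prop) (mul : X -> X -> X) (e : X).
Variables (nabla : X -> X) (imp : X -> X -> X).
Hypothesis monoidal : is_monoidal_poset le mul e.
Hypothesis oplax : is_oplax_monoidal le mul e nabla.
Hypothesis imp_galois : forall a b c, le (mul a (nabla b)) c <-> le b (imp a c).

Lemma imp_counit (a c : X) : le (mul a (nabla (imp a c))) c.
Proof.
  apply imp_galois; destruct monoidal as [[le_refl _] _]; apply le_refl.
Qed.

Lemma adjoint_is_implication : is_implication le mul e imp.
Proof.
  destruct monoidal as [[_ [_ le_trans]] [mulA [_ [mulr1 [le_mul_l le_mul_r]]]]].
  destruct oplax as [_ [nabla_e nabla_mul]].
  split; [| split; [| split]].
  - intros a a' b a_a'; apply imp_galois.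
    exact (le_trans _ _ _ (le_mul_l _ _ _ a_a') (imp_counit a' b)).
  - intros a b b' b_b'; apply imp_galois.
    exact (le_trans _ _ _ (imp_counit a b) b_b').
  - intro a; apply imp_galois.
    rewrite <- (mulr1 a) at 2; apply le_mul_r, nabla_e.
  - intros a b c; apply imp_galois.
    apply (le_trans _ _ _ (le_mul_r _ _ _ (nabla_mul _ _))); rewrite <- mulA.
    exact (le_trans _ _ _ (le_mul_l _ _ _ (imp_counit a b)) (imp_counit b c)).
Qed.

End AdjointImplication.

Theorem theorem5p7 (X : Type) (le : X -> X -> Prop) (mul : X -> X -> X) (e : X)
    (nabla : X -> X) :
  is_nc_spacetime le mul e nabla ->
  exists imp : X -> X -> X,
    is_implication le mul e imp /\
    (forall a b c : X, le (mul a (nabla b)) c <-> le b (imp a c)).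
Proof.
  intros [[monoidal [has_join [mul_join _]]] [nabla_join oplax]].
  pose proof monoidal as [[_ [_ le_trans]] [_ [_ [_ [_ le_mul_r]]]]].
  pose proof oplax as [nabla_mono _].
  set (imp := fun a => right_adjoint has_join (fun b => mul a (nabla b))).
  assert (imp_galois : forall a b c, le (mul a (nabla b)) c <-> le b (imp a c)).
  { intro a; apply (right_adjoint_galois le_trans has_join).
    - intros b b' b_b'; apply le_mul_r, nabla_mono, b_b'.
    - apply preserves_joins_comp; [exact (mul_join a) | exact nabla_join]. }
  exists imp; split; [exact (adjoint_is_implication _ monoidal oplax imp_galois) | exact imp_galois].
Qed.
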